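(* Let $M=\langle S,A,P,R,s_\iota,\gamma\rangle$ be an MDP, $s^*_1,s^*_2\in S$, and let $\mathcal{M}$ be the bisimulation metric RMDP constructed from $M$ (see context). Then the optimal robust value function $\underline{V}^*_{\mathcal{M}}\colon S\times S\to\mathbb{R}$ of $\mathcal{M}$ is a pseudometric on $S$.
   Context: An MDP $M=\langle S,A,P,R,s_\iota,\gamma\rangle$ has finite states $S$, finite actions $A$, transition function $P\colon S\times A\to\mathcal{D}(S)$, rewards $R\colon S\times A\to\mathbb{R}$, initial state $s_\iota$, discount $\gamma\in(0,1)$. A pseudometric on $X$ is $d\colon X\times X\to[0,\infty)$ with $d(x,x)=0$, $d(x,x')=d(x',x)$ and $d(x,x'')\le d(x,x')+d(x',x'')$. For distributions $\mu,\nu$ on $S$, $\Lambda_{\mu,\nu}$ is the set of couplings: $\vec\lambda\in\mathbb{R}_{\ge0}^{S\times S}$ with $\sum_{t'}\vec\lambda(t,t')=\mu(t)$ and $\sum_t\vec\lambda(t,t')=\nu(t')$. The bisimulation metric RMDP is $\mathcal{M}=\langle S\times S,A,\mathcal{U},\mathcal{R},\langle s^*_1,s^*_2\rangle,\gamma\rangle$, an $(s,a)$-rectangular RMDP with state space $S\times S$, uncertainty set $\mathcal{U}=\prod_{((s,s'),a)}\mathcal{U}_{((s,s'),a)}$ where $\mathcal{U}_{((s,s'),a)}=\Lambda_{P(s,a),P(s',a)}$ (a coupling $\vec\lambda$ is used as the distribution over successor pairs $(t,t')$), and reward $\mathcal{R}(\langle s,s'\rangle,a)=(1-\gamma)|R(s,a)-R(s',a)|$.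 For an RMDP with state space $Q$, actions $A$, rewards $\mathcal R$ and uncertainty set $\mathcal{U}$ inducing transition functions $P_{\vec u}$, the robust value of a policy $\pi$ is $\underline{V}^\pi(q)=\inf_{\vec u\in\mathcal{U}}\mathbb{E}_{\pi,P_{\vec u}}[\sum_{t\ge0}\gamma^t\mathcal{R}(q_t,a_t)\mid q_0=q]$ and the optimal robust value is $\underline{V}^*(q)=\sup_\pi\underline{V}^\pi(q)$ over all (history-dependent, randomized) policies. *)

From HB Require Import structures.
From mathcomp Require Import all_boot all_order all_algebra.
From mathcomp Require Import all_classical all_reals.
From mathcomp Require Import topology normedtype sequences.
Set Implicit Arguments. Unset Strict Implicit. Unset Printing Implicit Defensive.
Import Order.TTheory GRing.Theory Num.Theory numFieldNormedType.Exports.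
Local Open Scope ring_scope.
Local Open Scope classical_set_scope.

Section Defs.
Variable R : realType.

Definition is_dist (T : finType) (mu : {ffun T -> R}) : Prop :=
  (forall t, 0 <= mu t) /\ \sum_t mu t = 1.

Definition is_coupling (T : finType) (mu nu : {ffun T -> R})
  (lam : {ffun T * T -> R}) : Prop :=
  [/\ forall t t', 0 <= lam (t, t'),
      forall t, \sum_t' lam (t, t') = mu t &
      forall t', \sum_t lam (t, t') = nu t'].

Definition is_pseudometric (X : Type) (d : X -> X -> R) : Prop :=
  [/\ forall x x', 0 <= d x x',
      forall x, d x x = 0,
      forall x x', d x x' = d x' x &
      forall x x' x'', d x x'' <= d x x' + d x' x''].

Section RMDP.
Variables (Q A : finType).

(* history-dependent randomized policy: past (state,action) pairs and
   current state give a distribution over actions *)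
Definition policy := seq (Q * A) -> Q -> {ffun A -> R}.
Definition is_policy (pi : policy) : Prop := forall h q, is_dist (pi h q).

Definition trans := Q -> A -> {ffun Q -> R}.

Variables (rew : Q -> A -> R) (gamma : R).

(* expected discounted reward over the first T steps, starting from
   history h in current state q:  E[ sum_{t<T} gamma^t rew(q_t,a_t) ] *)
Fixpoint ret_T (pi : policy) (P : trans) (T : nat) (h : seq (Q * A)) (q : Q)
  : R :=
  match T with
  | 0 => 0
  | T'.+1 => \sum_a pi h q a *
       (rew q a + gamma * \sum_q' P q a q' * ret_T pi P T' (rcons h (q, a)) q')
  end.

Definition value (pi : policy) (P : trans) (q : Q) : R :=
  limn (fun T => ret_T pi P T [::] q).

Definition robust_value (U : set trans) (pi : policy) (q : Q) : R :=
  inf [set value pi P q | P in U].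

Definition opt_robust_value (U : set trans) (q : Q) : R :=
  sup [set robust_value U pi q | pi in is_policy].

End RMDP.

Section Bisim.
Variables (S A : finType) (P : S -> A -> {ffun S -> R}) (Rw : S -> A -> R)
  (gamma : R).

Definition bisim_unc : set (trans (S * S)%type A) :=
  [set u | forall (q : S * S) (a : A), is_coupling (P q.1 a) (P q.2 a) (u q a)].

Definition bisim_rew (q : S * S) (a : A) : R :=
  (1 - gamma) * `|Rw q.1 a - Rw q.2 a|.

Definition bisim_opt_value (q : S * S) : R :=
  opt_robust_value bisim_rew gamma bisim_unc q.

End Bisim.
End Defs.

(* The optimal robust value V* is the limit of value iteration V_0 = 0,
   V_(n+1) = B V_n, where the robust Bellman operator is
     B V (s, s') = max_a [(1 - γ) |R(s, a) - R(s', a)|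
                          + γ · min { Σ λ V | λ coupling of P(s, a) and P(s', a) }],
   and in fact |V* - V_n| <= γ^n K: against any policy, an adversary choosing
   nearly optimal couplings for V_n keeps every finite-horizon return below
   V_n + γ^n K, while the policy greedy for V_n secures V_n - γ^n K against every
   adversary.  The minimum over couplings is the Kantorovich lifting of V, which
   satisfies the pseudometric laws on distributions whenever V is a pseudometric
   (the triangle inequality by gluing two couplings along their common marginal),
   and a pointwise maximum of pseudometrics is a pseudometric; so every V_n is a
   pseudometric, and hence so is their uniform limit V*. *)

From HB Require Import structures.
From mathcomp Require Import all_boot all_order all_algebra.
From mathcomp Require Import all_classical all_reals.
From mathcomp Require Import topology normedtype sequences.
From mathcomp Require Import ring lra.
Import Order.TTheory GRing.Theory Num.Theory numFieldNormedType.Exports.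
Set Implicit Arguments. Unset Strict Implicit. Unset Printing Implicit Defensive.
Local Open Scope ring_scope.
Local Open Scope classical_set_scope.

Section Distributions.
Variables (R : realType) (T : finType).
Implicit Types (mu : {ffun T -> R}) (f : T -> R).

Definition mean mu f : R := \sum_t mu t * f t.

Lemma ler_mean mu f f' : is_dist mu -> (forall t, f t <= f' t) ->
  mean mu f <= mean mu f'.
Proof. by case=> mu0 _ ff'; apply: ler_sum => t _; exact: ler_wpM2l. Qed.

Lemma mean_cst mu c : is_dist mu -> mean mu (fun=> c) = c.
Proof. by case=> _ mu1; rewrite /mean -mulr_suml mu1 mul1r. Qed.

Lemma meanDr mu f c : is_dist mu -> mean mu (fun t => f t + c) = mean mu f + c.
Proof.
case=> _ mu1; rewrite /mean; under eq_bigr do rewrite mulrDr.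
by rewrite big_split /= -mulr_suml mu1 mul1r.
Qed.

Lemma mean_lb mu f b : is_dist mu -> (forall t, b <= f t) -> b <= mean mu f.
Proof. by move=> mu_dist bf; rewrite -(mean_cst b mu_dist); exact: ler_mean. Qed.

Lemma mean_ub mu f b : is_dist mu -> (forall t, f t <= b) -> mean mu f <= b.
Proof. by move=> mu_dist fb; rewrite -(mean_cst b mu_dist); exact: ler_mean. Qed.

End Distributions.

Section InfMean.
Variables (R : realType) (T : finType) (D : set {ffun T -> R}).
Hypotheses (D_dist : forall mu, D mu -> is_dist mu) (D_nonempty : D !=set0).
Implicit Types f : T -> R.

Definition inf_mean f : R := inf [set mean mu f | mu in D].

Lemma inf_mean_lbound f : has_lbound [set mean mu f | mu in D].
Proof.
exists (- \sum_t `|f t|) => _ [mu /D_dist mu_dist <-]; apply: mean_lb => // t.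
rewrite lerNl (bigD1 t) //= -normrN; apply: le_trans (ler_norm _) _.
by rewrite lerDl sumr_ge0.
Qed.

Lemma inf_mean_le mu f : D mu -> inf_mean f <= mean mu f.
Proof. by move=> Dmu; apply: ge_inf; [exact: inf_mean_lbound | exists mu]. Qed.

Lemma inf_mean_ge f b : (forall mu, D mu -> b <= mean mu f) -> b <= inf_mean f.
Proof.
move=> bf; apply: lb_le_inf; last by move=> _ [mu Dmu <-]; exact: bf.
by have [mu Dmu] := D_nonempty; exists (mean mu f), mu.
Qed.

Lemma inf_mean_approx f e : 0 < e -> exists2 mu, D mu & mean mu f < inf_mean f + e.
Proof.
move=> e0; have [|_ [mu Dmu <-] fe] := inf_adherent (E := [set mean mu f | mu in D]) e0.
  split; last exact: inf_mean_lbound.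
  by have [mu Dmu] := D_nonempty; exists (mean mu f), mu.
by exists mu.
Qed.

Lemma inf_mean_cst c : inf_mean (fun=> c) = c.
Proof.
have [mu Dmu] := D_nonempty; apply/le_anti/andP; split.
  by rewrite -{2}(mean_cst c (D_dist Dmu)); exact: inf_mean_le.
by apply: inf_mean_ge => nu /D_dist nu_dist; rewrite mean_cst.
Qed.

Lemma inf_mean_shift f f' c : (forall t, f t <= f' t + c) ->
  inf_mean f <= inf_mean f' + c.
Proof.
move=> ff'; rewrite -lerBlDr; apply: inf_mean_ge => mu Dmu.
rewrite lerBlDr -meanDr; last exact: D_dist.
by apply: le_trans (inf_mean_le f Dmu) _; apply: ler_mean (D_dist Dmu) _.
Qed.

End InfMean.

Section Couplings.
Variables (R : realType) (T : finType).
Implicit Types (mu nu : {ffun T -> R}) (lam : {ffun T * T -> R}).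

Lemma sum_pair (F : T * T -> R) : \sum_q F q = \sum_t \sum_t' F (t, t').
Proof. by rewrite pair_bigA; apply: eq_bigr => -[]. Qed.

Lemma coupling_dist mu nu lam : is_dist mu -> is_coupling mu nu lam -> is_dist lam.
Proof.
case=> _ mu1 [lam0 lam1 _]; split; first by case.
by rewrite sum_pair -mu1; apply: eq_bigr => t _; rewrite lam1.
Qed.

Lemma coupling_exists mu nu : is_dist mu -> is_dist nu ->
  exists lam, is_coupling mu nu lam.
Proof.
case=> mu0 mu1 [nu0 nu1]; exists [ffun tt => mu tt.1 * nu tt.2]; split.
- by move=> t t'; rewrite ffunE mulr_ge0.
- by move=> t; under eq_bigr do rewrite ffunE /=; rewrite -mulr_sumr nu1 mulr1.
- by move=> t; under eq_bigr do rewrite ffunE /=; rewrite -mulr_suml mu1 mul1r.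
Qed.

Definition diag_coupling mu : {ffun T * T -> R} :=
  [ffun tt => if tt.1 == tt.2 then mu tt.1 else 0].

Lemma diag_couplingP mu : is_dist mu -> is_coupling mu mu (diag_coupling mu).
Proof.
case=> mu0 _; split.
- by move=> t t'; rewrite ffunE /=; case: eqP.
- move=> t; rewrite (bigD1 t) //= ffunE eqxx big1 ?addr0 // => t' /negbTE.
  by rewrite ffunE /= eq_sym => ->.
- move=> t'; rewrite (bigD1 t') //= ffunE eqxx big1 ?addr0 // => t /negbTE.
  by rewrite ffunE /= => ->.
Qed.

Lemma mean_diag_coupling mu (c : T * T -> R) :
  mean (diag_coupling mu) c = mean mu (fun t => c (t, t)).
Proof.
rewrite /mean sum_pair; apply: eq_bigr => t _.
rewrite (bigD1 t) //= ffunE eqxx big1 ?addr0 // => t' /negbTE.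
by rewrite ffunE /= eq_sym => ->; rewrite mul0r.
Qed.

Definition swap_coupling lam : {ffun T * T -> R} := [ffun tt => lam (tt.2, tt.1)].

Lemma swap_couplingP mu nu lam :
  is_coupling mu nu lam -> is_coupling nu mu (swap_coupling lam).
Proof.
case=> lam0 lam1 lam2; split => [t t'|t|t']; rewrite ?ffunE //.
- by under eq_bigr do rewrite ffunE /=; rewrite lam2.
- by under eq_bigr do rewrite ffunE /=; rewrite lam1.
Qed.

Lemma mean_swap_coupling lam (c : T * T -> R) :
  mean (swap_coupling lam) c = mean lam (fun tt => c (tt.2, tt.1)).
Proof.
rewrite /mean (reindex_inj (h := fun tt : T * T => (tt.2, tt.1))) /=.
  by apply: eq_bigr => -[t t'] _; rewrite ffunE.
by move=> [x y] [z w] [-> ->].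
Qed.

Lemma coupling_eq0l mu nu lam t t' :
  is_coupling mu nu lam -> mu t = 0 -> lam (t, t') = 0.
Proof.
case=> lam0 lam1 _ mut0; apply/le_anti; rewrite lam0 andbT -mut0 -lam1.
by rewrite (bigD1 t') //= lerDl sumr_ge0.
Qed.

Lemma coupling_eq0r mu nu lam t t' :
  is_coupling mu nu lam -> nu t' = 0 -> lam (t, t') = 0.
Proof.
move=> /swap_couplingP /coupling_eq0l /[apply] /(_ t).
by rewrite ffunE.
Qed.

(* The mass lam1 (t, t') is split according to the conditional law
   lam2 (t', .) / nu t'.  Where nu t' = 0 the division is junk (x / 0 = 0), which
   is harmless since then lam1 (t, t') = lam2 (t', t'') = 0. *)
Definition glue_weight nu lam1 lam2 t t' t'' : R := lam1 (t, t') * (lam2 (t', t'') / nu t').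

Definition glue_coupling nu lam1 lam2 : {ffun T * T -> R} :=
  [ffun tt => \sum_t' glue_weight nu lam1 lam2 tt.1 t' tt.2].

Section Glue.
Variables (mu nu rho : {ffun T -> R}) (lam1 lam2 : {ffun T * T -> R}).
Hypotheses (lam1P : is_coupling mu nu lam1) (lam2P : is_coupling nu rho lam2).

Lemma glue_weight_ge0 t t' t'' : 0 <= glue_weight nu lam1 lam2 t t' t''.
Proof.
have [lam10 _ lam12] := lam1P; have [lam20 _ _] := lam2P.
by rewrite mulr_ge0 // divr_ge0 // -lam12 sumr_ge0.
Qed.

Lemma glue_weight_sum_r t t' : \sum_t'' glue_weight nu lam1 lam2 t t' t'' = lam1 (t, t').
Proof.
have [_ lam21 _] := lam2P; rewrite -mulr_sumr -mulr_suml lam21.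
have [nut'0|nut'_neq0] := eqVneq (nu t') 0; last by rewrite mulfV // mulr1.
by rewrite (coupling_eq0r t lam1P nut'0) mul0r.
Qed.

Lemma glue_weight_sum_l t' t'' : \sum_t glue_weight nu lam1 lam2 t t' t'' = lam2 (t', t'').
Proof.
have [_ _ lam12] := lam1P; rewrite -mulr_suml lam12.
have [nut'0|nut'_neq0] := eqVneq (nu t') 0; last by rewrite mulrCA mulfV // mulr1.
by rewrite (coupling_eq0l t'' lam2P nut'0) mul0r mulr0.
Qed.

Lemma glue_couplingP : is_coupling mu rho (glue_coupling nu lam1 lam2).
Proof.
have [_ lam11 _] := lam1P; have [_ _ lam22] := lam2P.
split => [t t''|t|t'']; rewrite ?ffunE.
- by apply: sumr_ge0 => t' _; exact: glue_weight_ge0.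
- under eq_bigr do rewrite ffunE /=.
  by rewrite exchange_big -lam11; apply: eq_bigr => t' _; rewrite glue_weight_sum_r.
- under eq_bigr do rewrite ffunE /=.
  by rewrite exchange_big -lam22; apply: eq_bigr => t' _; rewrite glue_weight_sum_l.
Qed.

Lemma mean_glue_coupling (c : T * T -> R) :
  (forall t t' t'', c (t, t'') <= c (t, t') + c (t', t'')) ->
  mean (glue_coupling nu lam1 lam2) c <= mean lam1 c + mean lam2 c.
Proof.
move=> c_tri; set w := glue_weight nu lam1 lam2.
have -> : mean lam1 c = \sum_t \sum_t' \sum_t'' w t t' t'' * c (t, t').
  rewrite /mean sum_pair; apply: eq_bigr => t _; apply: eq_bigr => t' _.
  by rewrite -mulr_suml glue_weight_sum_r.
have -> : mean lam2 c = \sum_t \sum_t' \sum_t'' w t t' t'' * c (t', t'').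
  rewrite exchange_big /mean sum_pair; apply: eq_bigr => t' _.
  rewrite exchange_big; apply: eq_bigr => t'' _.
  by rewrite -mulr_suml glue_weight_sum_l.
rewrite /mean sum_pair -big_split; apply: ler_sum => t _.
under eq_bigr do rewrite ffunE /= mulr_suml.
rewrite exchange_big -big_split; apply: ler_sum => t' _.
rewrite -big_split; apply: ler_sum => t'' _.
apply: le_trans (ler_wpM2l (glue_weight_ge0 t t' t'') (c_tri t t' t'')) _.
by rewrite mulrDr.
Qed.

End Glue.
End Couplings.

Section Kantorovich.
Variables (R : realType) (T : finType) (c : T * T -> R).
Hypothesis c_pm : is_pseudometric (curry c).
Implicit Types mu nu rho : {ffun T -> R}.

Definition kantorovich mu nu : R := inf_mean (is_coupling mu nu) c.

Lemma kantorovich_le mu nu lam : is_dist mu -> is_coupling mu nu lam ->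
  kantorovich mu nu <= mean lam c.
Proof. by move=> mu_dist; apply: inf_mean_le => lam'; exact: coupling_dist. Qed.

Lemma kantorovich_approx mu nu e : is_dist mu -> is_dist nu -> 0 < e ->
  exists2 lam, is_coupling mu nu lam & mean lam c < kantorovich mu nu + e.
Proof.
move=> mu_dist nu_dist; apply: inf_mean_approx; first by move=> lam; exact: coupling_dist.
exact: coupling_exists.
Qed.

Lemma kantorovich_ge mu nu b : is_dist mu -> is_dist nu ->
  (forall lam, is_coupling mu nu lam -> b <= mean lam c) -> b <= kantorovich mu nu.
Proof. by move=> mu_dist nu_dist; apply: inf_mean_ge; exact: coupling_exists. Qed.

Lemma kantorovich_ge0 mu nu : is_dist mu -> is_dist nu -> 0 <= kantorovich mu nu.
Proof.
have [c0 _ _ _] := c_pm; move=> mu_dist nu_dist.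
apply: kantorovich_ge => // lam lamP.
by apply: mean_lb (coupling_dist mu_dist lamP) _ => -[t t']; exact: c0.
Qed.

Lemma kantorovich_diag mu : is_dist mu -> kantorovich mu mu = 0.
Proof.
have [_ c_diag _ _] := c_pm; move=> mu_dist.
apply/le_anti; rewrite kantorovich_ge0 // andbT.
apply: le_trans (kantorovich_le mu_dist (diag_couplingP mu_dist)) _.
by rewrite mean_diag_coupling; apply: mean_ub => // t; rewrite [c _]c_diag.
Qed.

Lemma kantorovich_sym mu nu : is_dist mu -> is_dist nu ->
  kantorovich mu nu = kantorovich nu mu.
Proof.
have [_ _ c_sym _] := c_pm.
suff le_sym mu' nu' : is_dist mu' -> is_dist nu' ->
    kantorovich mu' nu' <= kantorovich nu' mu'.
  by move=> mu_dist nu_dist; apply/le_anti; rewrite !le_sym.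
move=> mu_dist nu_dist; apply: kantorovich_ge => // lam lamP.
apply: le_trans (kantorovich_le mu_dist (swap_couplingP lamP)) _.
rewrite mean_swap_coupling.
by have -> : (fun tt => c (tt.2, tt.1)) = c by apply/funext => -[t t']; exact: c_sym.
Qed.

Lemma kantorovich_triangle mu nu rho : is_dist mu -> is_dist nu -> is_dist rho ->
  kantorovich mu rho <= kantorovich mu nu + kantorovich nu rho.
Proof.
have [_ _ _ c_tri] := c_pm; move=> mu_dist nu_dist rho_dist.
apply/ler_addgt0Pr => e e0; have e2 : 0 < e / 2 by rewrite divr_gt0.
have [lam1 lam1P lam1e] := kantorovich_approx mu_dist nu_dist e2.
have [lam2 lam2P lam2e] := kantorovich_approx nu_dist rho_dist e2.
apply: le_trans (kantorovich_le mu_dist (glue_couplingP lam1P lam2P)) _.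
apply: le_trans (mean_glue_coupling lam1P lam2P c_tri) _.
by rewrite [e]splitr addrACA; apply: lerD; exact: ltW.
Qed.

End Kantorovich.

Section DeterministicPolicy.
Variables (R : realType) (Q A : finType).

Definition det_policy (f : seq (Q * A) -> Q -> A) : policy R Q A :=
  fun h q => [ffun a => (a == f h q)%:R].

Lemma mean_det_policy f h q (F : A -> R) : mean (det_policy f h q) F = F (f h q).
Proof.
rewrite /mean (bigD1 (f h q)) //= ffunE eqxx mul1r big1 ?addr0 // => a /negbTE.
by rewrite ffunE => ->; rewrite mul0r.
Qed.

Lemma det_policyP f : is_policy (det_policy f).
Proof.
move=> h q; split => [a|]; first by rewrite ffunE ler0n.
have := mean_det_policy f h q (fun=> 1); rewrite /mean => <-.
by apply: eq_bigr => a _; rewrite mulr1.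
Qed.

End DeterministicPolicy.

Section RectangularRMDP.
Variables (R : realType) (Q A : finType) (rew : Q -> A -> R) (g : R).
Variable U : Q -> A -> set {ffun Q -> R}.
Hypotheses (g01 : 0 < g < 1) (rew_ge0 : forall q a, 0 <= rew q a).
Hypotheses (U_dist : forall q a mu, U q a mu -> is_dist mu)
  (U_nonempty : forall q a, U q a !=set0).
Variable a0 : A.

Definition rect_unc : set (trans R Q A) := [set u | forall q a, U q a (u q a)].

Local Notation ret := (ret_T rew g).
Local Notation value := (value rew g).
Local Notation robust := (robust_value rew g rect_unc).
Local Notation opt := (opt_robust_value rew g rect_unc).

Let g_gt0 : 0 < g. Proof. by case/andP: g01. Qed.
Let g_ge0 : 0 <= g. Proof. exact: ltW. Qed.
Let g_le1 : g <= 1. Proof. by case/andP: g01 => _ /ltW. Qed.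
Let subr_g_gt0 : 0 < 1 - g. Proof. by case/andP: g01 => _; rewrite subr_gt0. Qed.

Definition rew_sum : R := \sum_(p : Q * A) rew p.1 p.2.

Lemma rew_le_sum q a : rew q a <= rew_sum.
Proof.
by rewrite /rew_sum (bigD1 (q, a)) //= lerDl sumr_ge0 // => p _; exact: rew_ge0.
Qed.

Lemma rew_sum_ge0 : 0 <= rew_sum.
Proof. by apply: sumr_ge0 => p _; exact: rew_ge0. Qed.

(* The + 1 absorbs the γ^n slack of the nearly optimal adversary in
   [ret_le_value_iter]. *)
Definition vbound : R := (rew_sum + 1) / (1 - g).

Lemma vbound_ge0 : 0 <= vbound.
Proof. by apply: divr_ge0; [rewrite addr_ge0 ?rew_sum_ge0 | exact: ltW]. Qed.

Lemma vbound_fix : rew_sum + 1 + g * vbound = vbound.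
Proof. by rewrite /vbound; field; exact: lt0r_neq0. Qed.

Definition qvalue (V : Q -> R) q a : R := rew q a + g * inf_mean (U q a) V.
Definition greedy (V : Q -> R) q : A := [arg max_(a > a0) qvalue V q a]%O.
Definition bellman (V : Q -> R) q : R := qvalue V q (greedy V q).

Lemma qvalue_le_bellman (V : Q -> R) q a : qvalue V q a <= bellman V q.
Proof. by rewrite /bellman /greedy; case: arg_maxP => //= a' _; apply. Qed.

Lemma bellman_ge0 (V : Q -> R) : (forall q, 0 <= V q) -> forall q, 0 <= bellman V q.
Proof.
move=> V0 q; rewrite addr_ge0 ?mulr_ge0 //.
by apply: inf_mean_ge => // mu /U_dist mu_dist; exact: mean_lb.
Qed.

Lemma bellman_shift (V W : Q -> R) c : (forall q, V q <= W q + c) ->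
  forall q, bellman V q <= bellman W q + g * c.
Proof.
move=> VW q; apply: le_trans (lerD (qvalue_le_bellman W q (greedy V q)) (lexx _)).
rewrite /bellman /qvalue -addrA lerD2l -mulrDr ler_wpM2l //.
by apply: inf_mean_shift VW; [exact: U_dist | exact: U_nonempty].
Qed.

Lemma bellman_cst c q : bellman (fun=> c) q <= rew_sum + g * c.
Proof.
rewrite /bellman /qvalue inf_mean_cst; first by rewrite lerD2r rew_le_sum.
- exact: U_dist.
- exact: U_nonempty.
Qed.

Definition value_iter n : Q -> R := iter n bellman (fun=> 0).

Lemma value_iter_ge0 n q : 0 <= value_iter n q.
Proof. by elim: n q => [|n IHn] q //=; exact: bellman_ge0. Qed.

Lemma value_iter_le n q : value_iter n q <= vbound.
Proof.
elim: n q => [|n IHn] q /=; first exact: vbound_ge0.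
have IHn0 q' : value_iter n q' <= vbound + 0 by rewrite addr0.
apply: le_trans (bellman_shift IHn0 q) _; rewrite mulr0 addr0.
by apply: le_trans (bellman_cst _ _) _; rewrite -[leRHS]vbound_fix lerD2r lerDl.
Qed.

Lemma value_iter_nondecr n q : value_iter n q <= value_iter n.+1 q.
Proof.
elim: n q => [|n IHn] q /=; first exact: bellman_ge0.
have IHn0 q' : value_iter n q' <= value_iter n.+1 q' + 0 by rewrite addr0.
by have := bellman_shift IHn0 q; rewrite mulr0 addr0.
Qed.

Lemma value_iter_step n q : value_iter n.+1 q <= value_iter n q + g ^+ n * rew_sum.
Proof.
elim: n q => [|n IHn] q.
  by rewrite add0r expr0 mul1r -[leRHS]addr0 -(mulr0 g); exact: bellman_cst.
by rewrite exprS -mulrA; exact: bellman_shift.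
Qed.

Lemma retS pi u T h q : ret pi u T.+1 h q =
  mean (pi h q) (fun a => rew q a + g * mean (u q a) (ret pi u T (rcons h (q, a)))).
Proof. by []. Qed.

Section PolicyEvaluation.
Variables (pi : policy R Q A) (u : trans R Q A).
Hypotheses (pi_policy : is_policy pi) (u_unc : rect_unc u).

Let u_dist q a : is_dist (u q a). Proof. exact: U_dist (u_unc q a). Qed.

Lemma ret_ge0 T h q : 0 <= ret pi u T h q.
Proof.
elim: T h q => [|T IHT] h q //; rewrite retS; apply: mean_lb => // a.
by rewrite addr_ge0 ?mulr_ge0 //; exact: mean_lb.
Qed.

Lemma ret_nondecr T h q : ret pi u T h q <= ret pi u T.+1 h q.
Proof.
elim: T h q => [|T IHT] h q; first exact: ret_ge0.
rewrite [leRHS]retS retS; apply: ler_mean => // a.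
by rewrite lerD2l ler_wpM2l //; exact: ler_mean.
Qed.

Lemma ret_le_vbound T h q : ret pi u T h q <= vbound.
Proof.
elim: T h q => [|T IHT] h q; first exact: vbound_ge0.
rewrite retS; apply: mean_ub => // a; rewrite -vbound_fix -addrA lerD ?rew_le_sum //.
by apply: ler_wpDl => //; rewrite ler_wpM2l //; exact: mean_ub.
Qed.

Lemma value_sup q : value pi u q = sup (range (fun T => ret pi u T [::] q)).
Proof.
apply/cvg_lim => //; apply: nondecreasing_cvgn.
  by apply/nondecreasing_seqP => T; exact: ret_nondecr.
by exists vbound => _ [T _ <-]; exact: ret_le_vbound.
Qed.

Lemma ret_le_value T q : ret pi u T [::] q <= value pi u q.
Proof.
rewrite value_sup; apply: ub_le_sup; last by exists T.
by exists vbound => _ [T' _ <-]; exact: ret_le_vbound.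
Qed.

Lemma value_le q b : (forall T, ret pi u T [::] q <= b) -> value pi u q <= b.
Proof.
move=> retb; rewrite value_sup; apply: ge_sup => [|_ [T _ <-]]; last exact: retb.
by exists (ret pi u 0 [::] q), 0%N.
Qed.

End PolicyEvaluation.

Lemma rect_unc_nonempty : rect_unc !=set0.
Proof.
have /choice[u uU] : forall qa : Q * A, exists mu, U qa.1 qa.2 mu.
  by move=> qa; exact: U_nonempty.
by exists (fun q a => u (q, a)) => q a; exact: uU (q, a).
Qed.

Lemma robust_le_value pi u q : is_policy pi -> rect_unc u ->
  robust pi q <= value pi u q.
Proof.
move=> pi_policy u_unc; apply: ge_inf; last by exists u.
by exists 0 => _ [v v_unc <-]; exact: le_trans (ret_ge0 _ _ _ _ _) (ret_le_value _ _ 0 _).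
Qed.

Lemma robust_ge pi q b : (forall u, rect_unc u -> b <= value pi u q) ->
  b <= robust pi q.
Proof.
move=> bv; apply: lb_le_inf => [|_ [u u_unc <-]]; last exact: bv.
by have [u u_unc] := rect_unc_nonempty; exists (value pi u q), u.
Qed.

Section UpperBound.
Variables (n : nat) (pi : policy R Q A) (u : trans R Q A).
Hypotheses (pi_policy : is_policy pi) (u_unc : rect_unc u).
Hypothesis u_near_opt : forall q a,
  mean (u q a) (value_iter n) <= inf_mean (U q a) (value_iter n) + g ^+ n.

Lemma ret_le_value_iter T h q : ret pi u T h q <= value_iter n q + g ^+ n * vbound.
Proof.
elim: T h q => [|T IHT] h q.
  by apply: addr_ge0; [exact: value_iter_ge0 | rewrite mulr_ge0 ?exprn_ge0 ?vbound_ge0].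
rewrite retS; apply: mean_ub => // a.
have u_dist : is_dist (u q a) by exact: U_dist (u_unc q a).
apply: le_trans (_ : qvalue (value_iter n) q a + g * (g ^+ n + g ^+ n * vbound) <= _).
  rewrite /qvalue -addrA lerD2l -mulrDr ler_wpM2l //.
  apply: le_trans (ler_mean u_dist (IHT (rcons h (q, a)))) _.
  by rewrite meanDr // addrA lerD2r.
apply: le_trans (lerD (qvalue_le_bellman _ q a) (lexx _)) _.
apply: le_trans (lerD (value_iter_step n q) (lexx _)) _.
rewrite -addrA lerD2l -[X in _ <= _ * X]vbound_fix.
have : g * g ^+ n <= g ^+ n by rewrite ler_piMl ?exprn_ge0.
nra.
Qed.

End UpperBound.

Lemma robust_le_value_iter n pi q : is_policy pi ->
  robust pi q <= value_iter n q + g ^+ n * vbound.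
Proof.
move=> pi_policy; have gn_gt0 : 0 < g ^+ n by rewrite exprn_gt0.
have /choice[u uP] : forall qa : Q * A, exists mu, U qa.1 qa.2 mu /\
    mean mu (value_iter n) < inf_mean (U qa.1 qa.2) (value_iter n) + g ^+ n.
  move=> [q' a].
  have [mu] := inf_mean_approx (@U_dist q' a) (U_nonempty q' a) (value_iter n) gn_gt0.
  by exists mu.
have u_unc : rect_unc (fun q a => u (q, a)) by move=> q' a; case: (uP (q', a)).
apply: le_trans (robust_le_value q pi_policy u_unc) _.
apply: value_le => // T; apply: ret_le_value_iter => // q' a.
by case: (uP (q', a)) => _ /ltW.
Qed.

Definition greedy_policy n : policy R Q A :=
  det_policy R (fun _ => greedy (value_iter n)).

Lemma value_iter_le_ret n u k h q : rect_unc u ->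
  value_iter n q - g ^+ k * vbound <= ret (greedy_policy n) u k h q.
Proof.
move=> u_unc; elim: k h q => [|k IHk] h q.
  by rewrite expr0 mul1r subr_le0 value_iter_le.
rewrite retS mean_det_policy; set a := greedy _ q.
have u_dist : is_dist (u q a) by exact: U_dist (u_unc q a).
apply: le_trans (lerD (value_iter_nondecr n q) (lexx _)) _.
rewrite [value_iter _ _]/= /bellman -/a /qvalue exprS -mulrA -addrA -mulrBr.
rewrite lerD2l ler_wpM2l //; apply: le_trans (ler_mean u_dist (IHk (rcons h (q, a)))).
by rewrite meanDr // lerD2r; apply: inf_mean_le; [exact: U_dist | exact: u_unc].
Qed.

Lemma opt_le_value_iter n q : opt q <= value_iter n q + g ^+ n * vbound.
Proof.
apply: ge_sup => [|_ [pi pi_policy <-]]; last exact: robust_le_value_iter.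
by exists (robust (greedy_policy n) q), (greedy_policy n) => //; exact: det_policyP.
Qed.

Lemma value_iter_le_opt n q : value_iter n q - g ^+ n * vbound <= opt q.
Proof.
have greedy_policyP : is_policy (greedy_policy n) by exact: det_policyP.
apply: le_trans (_ : robust (greedy_policy n) q <= _); last first.
  apply: ub_le_sup; last by exists (greedy_policy n).
  exists vbound => _ [pi pi_policy <-]; apply: le_trans (robust_le_value_iter 0 q pi_policy) _.
  by rewrite expr0 mul1r /= add0r.
apply: robust_ge => u u_unc; apply: le_trans (ret_le_value greedy_policyP u_unc n q).
exact: value_iter_le_ret.
Qed.

Lemma value_iter_approx n q : `|opt q - value_iter n q| <= g ^+ n * vbound.
Proof.
have := opt_le_value_iter n q; have := value_iter_le_opt n q.
rewrite ler_norml; lra.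
Qed.

End RectangularRMDP.

(* Without actions no policy exists, and [sup set0 = 0]. *)
Lemma opt_robust_value_no_action (R : realType) (Q A : finType) (rew : Q -> A -> R)
    (g : R) (U : set (trans R Q A)) q :
  #|A| = 0%N -> opt_robust_value rew g U q = 0.
Proof.
move=> A0; rewrite /opt_robust_value -[RHS]sup0; congr sup.
apply/seteqP; split => // y [pi pi_policy _]; have [_] := pi_policy [::] q.
by rewrite big_pred0 => [/eqP|a]; [rewrite eq_sym oner_eq0 | have := card0_eq A0 a].
Qed.

Section Pseudometrics.
Variables (R : realType) (X : Type).

Lemma ler_of_cvg0 (x y : R) (e : R^nat) :
  e @ \oo --> 0 -> (forall n, x <= y + e n) -> x <= y.
Proof.
move=> e0 xy; have ye : (fun n => y + e n) @ \oo --> y.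
  by rewrite -[y in _ --> y]addr0; apply: cvgD => //; exact: cvg_cst.
by rewrite -(cvg_lim _ ye) //; apply: limr_ge; [exact: cvgP ye | exact: nearW].
Qed.

Lemma pseudometric_lim (d : X -> X -> R) (V : nat -> X -> X -> R) (e : R^nat) :
  e @ \oo --> 0 -> (forall n, is_pseudometric (V n)) ->
  (forall n x x', `|d x x' - V n x x'| <= e n) -> is_pseudometric d.
Proof.
move=> e0 V_pm dV.
have dV_le n x x' : V n x x' - e n <= d x x' <= V n x x' + e n.
  by have := dV n x x'; rewrite ler_norml; lra.
have {}e0 : (fun n => e n *+ 3) @ \oo --> 0 by rewrite -(mul0rn _ 3); exact: cvgMn.
have le_lim x y : (forall n, x <= y + e n *+ 3) -> x <= y by exact: ler_of_cvg0.
split.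
- move=> x x'; apply: le_lim => n; have [V0 _ _ _] := V_pm n.
  by have := V0 x x'; have := dV_le n x x'; rewrite -mulr_natr; lra.
- move=> x; apply/le_anti/andP; split; apply: le_lim => n;
    by have [_ Vxx _ _] := V_pm n; have := Vxx x; have := dV_le n x x; rewrite -mulr_natr; lra.
- move=> x x'; apply/le_anti/andP; split; apply: le_lim => n;
    have [_ _ Vsym _] := V_pm n; have := Vsym x x'; have := dV_le n x x';
    by have := dV_le n x' x; rewrite -mulr_natr; lra.
- move=> x x' x''; apply: le_lim => n; have [_ _ _ Vtri] := V_pm n.
  have := Vtri x x' x''; have := dV_le n x x''; have := dV_le n x x'; have := dV_le n x' x''.
  by rewrite -mulr_natr; lra.
Qed.

Lemma pseudometric_argmax (A : finType) (a0 : A) (F : A -> X -> X -> R) :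
  (forall a, is_pseudometric (F a)) ->
  is_pseudometric (fun x y => F [arg max_(a > a0) F a x y]%O x y).
Proof.
move=> F_pm; set amax := fun x y => [arg max_(a > a0) F a x y]%O.
have F_le_max a x y : F a x y <= F (amax x y) x y.
  by rewrite /amax; case: arg_maxP => //= a' _; apply.
split.
- by move=> x y; have [F0 _ _ _] := F_pm (amax x y); exact: F0.
- by move=> x; have [_ Fxx _ _] := F_pm (amax x x); exact: Fxx.
- suff le_sym x y : F (amax x y) x y <= F (amax y x) y x.
    by move=> x y; apply/le_anti; rewrite !le_sym.
  by have [_ _ Fsym _] := F_pm (amax x y); rewrite Fsym F_le_max.
- move=> x y z; have [_ _ _ Ftri] := F_pm (amax x z).
  by apply: le_trans (Ftri x y z) _; apply: lerD; exact: F_le_max.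
Qed.

End Pseudometrics.

Section BisimulationMetric.
Variables (R : realType) (S A : finType) (P : S -> A -> {ffun S -> R}).
Variables (Rw : S -> A -> R) (g : R).
Hypotheses (g01 : 0 < g < 1) (P_dist : forall s a, is_dist (P s a)).
Variable a0 : A.

Local Notation Q := (S * S)%type.
Let U (q : Q) a : set {ffun Q -> R} := is_coupling (P q.1 a) (P q.2 a).
Local Notation rew := (bisim_rew Rw g).

Let g_ge0 : 0 <= g. Proof. by case/andP: g01 => /ltW. Qed.
Let subr_g_ge0 : 0 <= 1 - g. Proof. by case/andP: g01 => _ /ltW; rewrite subr_ge0. Qed.

Lemma bisim_rew_ge0 q a : 0 <= rew q a.
Proof. by rewrite mulr_ge0. Qed.

Lemma bisim_unc_dist q a lam : U q a lam -> is_dist lam.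
Proof. exact: coupling_dist. Qed.

Lemma bisim_unc_nonempty q a : U q a !=set0.
Proof. exact: coupling_exists. Qed.

Lemma bisim_qvalue_pseudometric (V : Q -> R) a : is_pseudometric (curry V) ->
  is_pseudometric (fun s s' => qvalue rew g U V (s, s') a).
Proof.
move=> V_pm; rewrite /qvalue /bisim_rew /=; split.
- move=> s s'; rewrite addr_ge0 ?mulr_ge0 //; exact: kantorovich_ge0.
- by move=> s; rewrite subrr normr0 mulr0 add0r [inf_mean _ _]kantorovich_diag ?mulr0.
- by move=> s s'; rewrite distrC [inf_mean _ _]kantorovich_sym.
- move=> s s' s''; rewrite addrACA -!mulrDr; apply: lerD; apply: ler_wpM2l => //.
    exact: ler_distD.
  exact: kantorovich_triangle.
Qed.

Lemma bisim_value_iter_pseudometric n :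
  is_pseudometric (curry (value_iter rew g U a0 n)).
Proof.
elim: n => [|n IHn]; first by split=> *; rewrite /= ?addr0.
exact: pseudometric_argmax (fun a => bisim_qvalue_pseudometric a IHn).
Qed.

End BisimulationMetric.

Theorem lemma18 (R : realType) (S A : finType) (P : S -> A -> {ffun S -> R})
  (Rw : S -> A -> R) (s_iota : S) (gamma : R)
  (hgamma : 0 < gamma < 1) (hP : forall s a, is_dist (P s a))
  (s1 s2 : S) :
  is_pseudometric (fun s s' : S => bisim_opt_value P Rw gamma (s, s')).
Proof.
have [A0|/card_gt0P[a0 _]] := posnP #|A|.
  have opt0 q : bisim_opt_value P Rw gamma q = 0 by exact: opt_robust_value_no_action.
  by split=> *; rewrite ?opt0 ?addr0.
have gn_cvg0 : (fun n => gamma ^+ n * vbound (bisim_rew Rw gamma) gamma) @ \oo --> 0.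
  rewrite -(mul0r (vbound (bisim_rew Rw gamma) gamma)); apply: cvgM; last exact: cvg_cst.
  by apply: cvg_expr; rewrite ger0_norm; case/andP: hgamma => /ltW.
apply: (pseudometric_lim gn_cvg0 (bisim_value_iter_pseudometric Rw hgamma hP a0)).
move=> n s s'; apply: value_iter_approx => //.
- exact: bisim_rew_ge0.
- exact: bisim_unc_dist.
- exact: bisim_unc_nonempty.
Qed.
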